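(* Let $p$ be a prime and $X$ a countable set. A matrix $M=(a_{ij})_{i,j\in X}$ with entries in $\mathbb{Q}_p$ is of the form $M=M_A$ for some $A\in\mathcal{B}(\mathbb{Q}_p(X))$ if and only if (a) $M$ has only finitely many entries in $\mathbb{Q}_p\setminus\mathbb{Z}_p$, and (b) for every $k\in X$ one has $\lim_{i\to\infty}a_{ik}=0$ and $\lim_{j\to\infty}a_{kj}=0$ (limits along the cofinite filter on $X$, i.e. for every $\varepsilon>0$ only finitely many $i$ satisfy $|a_{ik}|_p>\varepsilon$, and similarly for $j$).
   Context: $\mathbb{Q}_p(X)$ is the set of maps $\xi:X\to\mathbb{Q}_p$ with $|\xi(i)|_p\le1$ for all but finitely many $i$, a $\mathbb{Z}_p$-module under coordinatewise operations, with the topology $\tau$ in which $A\subseteq\mathbb{Q}_p(X)$ is open iff for every finite $P\subseteq X$ the set $A\cap\big(\prod_{i\in P}\mathbb{Q}_p\times\prod_{j\in X\setminus P}\mathbb{Z}_p\big)$ is open in the product topology. $\mathcal{B}(\mathbb{Q}_p(X))$ is the set of $\tau$-continuous $\mathbb{Z}_p$-linear maps on $\mathbb{Q}_p(X)$. For $x\in X$, $\delta_x\in\mathbb{Q}_p(X)$ is given by $\delta_x(x)=1$, $\delta_x(y)=0$ for $y\ne x$. For $A\in\mathcal{B}(\mathbb{Q}_p(X))$, its matrix is $M_A=(A_{ij})_{i,j\in X}$ with $A_{ij}=(A\delta_j)(i)$. *)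

From HB Require Import structures.
From mathcomp Require Import all_boot all_order all_algebra.
From mathcomp Require Import boolp classical_sets cardinality.
Set Implicit Arguments. Unset Strict Implicit. Unset Printing Implicit Defensive.
Import Order.TTheory GRing.Theory Num.Theory.
Local Open Scope ring_scope.
Local Open Scope classical_set_scope.

(* An element alpha of Q_p is represented by the sequence (x_n)_n of its   *)
(* canonical residues: x_n is the unique element of Z[1/p] with            *)
(* 0 <= x_n < p^n and alpha - x_n in p^n Z_p.  (Q_p = lim Z[1/p]/p^n Z.)   *)
(* This representation is unique, so Leibniz equality on representatives  *)
(* is equality in Q_p.                                                     *)

Definition Qp := nat -> rat.

Section Padic.
Variable p : nat.
Local Notation P := (p%:Q).

Definition isQp (x : Qp) : Prop :=
  [/\ forall n : nat, 0 <= x n < P ^+ n,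
      forall n : nat, (x n.+1 - x n) / P ^+ n \is a Num.int
    & exists k : nat, P ^+ k * x 0%N \is a Num.int].

Definition rmod (r m : rat) : rat := r - m * (Num.floor (r / m))%:~R.

(* canonical image of a rational of Z[1/p] in Q_p *)
Definition fromQ (r : rat) : Qp := fun n => rmod r (P ^+ n).

Definition pzero : Qp := fromQ 0.
Definition pone : Qp := fromQ 1.

Definition padd (x y : Qp) : Qp := fun n => rmod (x n + y n) (P ^+ n).
Definition popp (x : Qp) : Qp := fun n => rmod (- x n) (P ^+ n).
Definition psub (x y : Qp) : Qp := padd x (popp y).

(* least k with p^k x_0 integral, i.e. -min(v_p(x),0) *)
Definition pden (x : Qp) : nat :=
  match pselect (exists k : nat, P ^+ k * x 0%N \is a Num.int) with
  | left h => @ex_minn (fun k : nat => P ^+ k * x 0%N \is a Num.int) h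
  | right _ => 0%N
  end.

Definition pmul (x y : Qp) : Qp :=
  fun n => rmod (x (n + (pden x + pden y))%N * y (n + (pden x + pden y))%N)
                (P ^+ n).

Definition pnorm (x : Qp) : rat :=
  if (0 < pden x)%N then P ^+ pden x
  else match pselect (exists n : nat, x n != 0) with
       | left h => P ^- (@ex_minn (fun n : nat => x n != 0) h).-1
       | right _ => 0
       end.

Variable X : countType.

Definition inQpX (xi : X -> Qp) : Prop :=
  (forall i, isQp (xi i)) /\ finite_set [set i | 1 < pnorm (xi i)].

Definition SP (F : set X) : set (X -> Qp) :=
  [set xi | (forall i, isQp (xi i)) /\ forall i, ~ F i -> pnorm (xi i) <= 1].

(* B is open in S_P for the product topology (Q_p, Z_p metric topologies) *)
Definition open_in_SP (F : set X) (B : set (X -> Qp)) : Prop :=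
  forall xi, SP F xi -> B xi ->
    exists G : set X, finite_set G /\
    exists eps : rat, 0 < eps /\
      forall eta, SP F eta ->
        (forall i, G i -> pnorm (psub (eta i) (xi i)) < eps) -> B eta.

Definition tau_open (U : set (X -> Qp)) : Prop :=
  (forall xi, U xi -> inQpX xi) /\
  forall F : set X, finite_set F -> open_in_SP F (U `&` SP F).

Definition vadd (xi eta : X -> Qp) : X -> Qp := fun i => padd (xi i) (eta i).
Definition vscale (a : Qp) (xi : X -> Qp) : X -> Qp := fun i => pmul a (xi i).

(* A : Q_p(X) -> Q_p(X) (values outside Q_p(X) are irrelevant) is a
   tau-continuous Z_p-linear map, i.e. A is in B(Q_p(X)). *)
Definition in_B (A : (X -> Qp) -> (X -> Qp)) : Prop :=
  [/\ forall xi, inQpX xi -> inQpX (A xi),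
      forall xi eta, inQpX xi -> inQpX eta -> A (vadd xi eta) = vadd (A xi) (A eta),
      forall a xi, isQp a -> pnorm a <= 1 -> inQpX xi ->
                   A (vscale a xi) = vscale a (A xi)
    & forall U, tau_open U -> tau_open [set xi | inQpX xi /\ U (A xi)]].

Definition delta (x : X) : X -> Qp := fun y => if y == x then pone else pzero.

End Padic.

(* Entries are read through canonical residues: for the representative x of a
   p-adic number, x m = 0 exactly when |x|_p <= p^-m.  So (a) says that only
   finitely many entries are nonzero modulo Z_p, and (b) that, for every m, each
   row and each column has only finitely many entries nonzero modulo p^m.

   Necessity.  As p^-m delta_k lies in Q_p(X), Z_p-linearity gives
   A delta_k = p^m A (p^-m delta_k), and A (p^-m delta_k) has only finitely many
   entries outside Z_p; this controls the columns.  The rows and (a) come from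
   continuity at 0: the vectors whose k-th entry lies in p^m Z_p (resp. all of
   whose entries lie in Z_p) form a tau-open set, so its preimage contains
   delta_j for all but finitely many j.

   Sufficiency.  Put (A xi)_i = sum_j a_ij xi_j.  Modulo p^n only the finitely
   many j with xi_j outside Z_p or a_ij outside p^n Z_p contribute, so this is a
   finite sum.  The resulting map is Z_p-linear, and it is continuous because,
   modulo p^m, finitely many coordinates of A xi only depend on finitely many
   coordinates of xi modulo p^K, with p^(K - m) bounding the denominators of the
   entries of A and xi involved. *)

From mathcomp Require Import all_boot all_order all_algebra.
From mathcomp Require Import boolp classical_sets cardinality fsbigop finmap.
From mathcomp Require Import ring lra zify.
Set Implicit Arguments. Unset Strict Implicit. Unset Printing Implicit Defensive.
Import Order.TTheory GRing.Theory Num.Theory.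
Local Open Scope ring_scope.
Local Open Scope classical_set_scope.

Section Padic.
Variable p : nat.
Hypothesis p_gt1 : (1 < p)%N.
Local Notation P := (p%:Q).

(** * Congruences modulo powers of p *)

Lemma P_gt1 : 1 < P.
Proof. by rewrite ltr1n. Qed.

Lemma expP_gt0 n : 0 < P ^+ n.
Proof. by rewrite exprn_gt0 // (lt_trans ltr01 P_gt1). Qed.

Lemma expP_neq0 n : P ^+ n != 0.
Proof. by rewrite gt_eqF ?expP_gt0. Qed.

Lemma expP_int n : P ^+ n \is a Num.int.
Proof. by rewrite rpredX // intr_nat ?natr_nat. Qed.

Lemma expPN_gt0 n : 0 < P ^- n.
Proof. by rewrite invr_gt0 expP_gt0. Qed.

Lemma expPN_le m n : (P ^- m <= P ^- n) = (n <= m)%N.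
Proof. by rewrite lef_pV2 ?posrE ?expP_gt0 // (ler_eXn2l P_gt1). Qed.

Lemma expPN_lt eps : 0 < eps -> exists m, P ^- m < eps.
Proof.
move=> eps_gt0; set m := Num.Def.archi_bound eps^-1; exists m.
have m_le_Pm : (m%:R : rat) <= P ^+ m.
  elim: (m) => [|k IHk]; first by rewrite expr0 ler01.
  have Pk_ge1 : 1 <= P ^+ k by rewrite exprn_ege1 // ltW // P_gt1.
  have P_ge2 : 2 <= P by rewrite ler_nat.
  rewrite exprS -natr1; nra.
have epsV_ge0 : 0 <= eps^-1 by rewrite invr_ge0 ltW.
have := lt_le_trans (archi_boundP epsV_ge0) m_le_Pm.
by rewrite -[X in _ < X]invrK ltf_pV2 ?posrE ?invr_gt0 ?expP_gt0.
Qed.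

Definition congp n (r s : rat) := (r - s) / P ^+ n \is a Num.int.

Lemma congp_refl n r : congp n r r.
Proof. by rewrite /congp subrr mul0r. Qed.

Lemma congp_sym n r s : congp n r s -> congp n s r.
Proof. by rewrite /congp -opprB mulNr rpredN. Qed.

Lemma congp_trans n r s t : congp n r s -> congp n s t -> congp n r t.
Proof. by move=> rs st; have := rpredD rs st; rewrite -mulrDl addrA subrK. Qed.

Lemma congpD n a b c d : congp n a b -> congp n c d -> congp n (a + c) (b + d).
Proof.
move=> ab cd; rewrite /congp (_ : a + c - (b + d) = (a - b) + (c - d)); last by ring.
by rewrite mulrDl rpredD.
Qed.

Lemma congpN n a b : congp n a b -> congp n (- a) (- b).
Proof. by rewrite /congp -opprD mulNr rpredN. Qed.

Lemma congp_sum (I : Type) n (s : seq I) (f g : I -> rat) :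
  (forall i, congp n (f i) (g i)) ->
  congp n (\sum_(i <- s) f i) (\sum_(i <- s) g i).
Proof.
move=> fg; elim: s => [|i s IHs]; first by rewrite !big_nil congp_refl.
by rewrite !big_cons congpD.
Qed.

Lemma congpW m n a b : (m <= n)%N -> congp n a b -> congp m a b.
Proof.
move=> /subnKC <-; set k := (n - m)%N; rewrite /congp exprD invfM mulrA => h.
by rewrite -[_ / _](divfK (expP_neq0 k)) rpredM ?expP_int.
Qed.

Lemma int_norm_lt1 (z : rat) : z \is a Num.int -> `|z| < 1 -> z = 0.
Proof.
case/intrP=> m ->; rewrite -intr_norm -[1]/((1%:Z)%:~R) ltr_int.
by case: m => [[|n]|n].
Qed.

Lemma congp_uniq n a b : 0 <= a < P ^+ n -> 0 <= b < P ^+ n -> congp n a b -> a = b.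
Proof.
move=> /andP[a_ge0 a_lt] /andP[b_ge0 b_lt] /int_norm_lt1.
rewrite normrM normfV (gtr0_norm (expP_gt0 n)) ltr_pdivrMr ?expP_gt0 // mul1r.
have -> : `|a - b| < P ^+ n by rewrite ltr_norml; apply/andP; split; lra.
move=> /(_ isT) /eqP; rewrite mulf_eq0 invr_eq0 (negbTE (expP_neq0 _)) orbF.
by rewrite subr_eq0 => /eqP.
Qed.

Definition pint k (r : rat) := P ^+ k * r \is a Num.int.

Lemma pint0 k : pint k 0.
Proof. by rewrite /pint mulr0 rpred0. Qed.

Lemma pint_int k r : r \is a Num.int -> pint k r.
Proof. by move=> r_int; rewrite /pint rpredM ?expP_int. Qed.

Lemma pintW k l r : (k <= l)%N -> pint k r -> pint l r.
Proof. by move=> /subnK <- r_k; rewrite /pint exprD -mulrA rpredM ?expP_int. Qed.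

Lemma pintD k r s : pint k r -> pint k s -> pint k (r + s).
Proof. by rewrite /pint mulrDr; apply: rpredD. Qed.

Lemma pintN k r : pint k r -> pint k (- r).
Proof. by rewrite /pint mulrN rpredN. Qed.

Lemma pintM k l r s : pint k r -> pint l s -> pint (k + l) (r * s).
Proof.
rewrite /pint exprD (_ : _ * _ * (r * s) = P ^+ k * r * (P ^+ l * s)) //; last by ring.
exact: rpredM.
Qed.

Lemma pint_sum (I : Type) k (s : seq I) (f : I -> rat) :
  (forall i, pint k (f i)) -> pint k (\sum_(i <- s) f i).
Proof.
move=> f_k; elim: s => [|i s IHs]; first by rewrite big_nil pint0.
by rewrite big_cons pintD.
Qed.

Lemma pint_congp k r s : congp 0 r s -> pint k r -> pint k s.
Proof.
rewrite /congp expr0 divr1 => rs r_k.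
have -> : s = r - (r - s) by ring.
by apply: pintD r_k (pintN (pint_int k rs)).
Qed.

Lemma congpMl n k t a b : pint k t -> congp (n + k) a b -> congp n (t * a) (t * b).
Proof.
rewrite /pint /congp => t_k ab.
have -> : (t * a - t * b) / P ^+ n = P ^+ k * t * ((a - b) / P ^+ (n + k)).
  by rewrite exprD; field; rewrite !expP_neq0.
exact: rpredM.
Qed.

Lemma congpM n k l x x' y y' : pint k x -> pint l y' ->
  congp (n + l) x x' -> congp (n + k) y y' -> congp n (x * y) (x' * y').
Proof.
move=> x_k y'_l xx' yy'; apply: congp_trans (congpMl x_k yy') _.
by rewrite ![_ * y']mulrC; apply: congpMl y'_l xx'.
Qed.

Lemma rmod_bounds n r : 0 <= rmod r (P ^+ n) < P ^+ n.
Proof.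
rewrite /rmod; have := floor_le (r / P ^+ n); have := floorD1_gt (r / P ^+ n).
rewrite intrD; set f := ((Num.floor _)%:~R : rat) => f_gt f_le.
have Pn_gt0 := expP_gt0 n; rewrite -[r in r - _](divfK (expP_neq0 n)).
set q := r / P ^+ n in f_gt f_le *; apply/andP; split; nra.
Qed.

Lemma rmod_congp n r : congp n (rmod r (P ^+ n)) r.
Proof.
rewrite /congp /rmod (_ : _ / _ = - (Num.floor (r / P ^+ n))%:~R).
  by rewrite rpredN intr_int.
by field; rewrite expP_neq0.
Qed.

Lemma rmod_uniq n z r : 0 <= z < P ^+ n -> congp n z r -> z = rmod r (P ^+ n).
Proof.
move=> z_bounds zr; apply: congp_uniq z_bounds (rmod_bounds n r) _.
exact: congp_trans zr (congp_sym (rmod_congp n r)).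
Qed.

Lemma rmod_congr n r s : congp n r s -> rmod r (P ^+ n) = rmod s (P ^+ n).
Proof. by move=> rs; apply/rmod_uniq/(congp_trans (rmod_congp n r))/rs/rmod_bounds. Qed.

Lemma rmod_id n r : 0 <= r < P ^+ n -> rmod r (P ^+ n) = r.
Proof. by move=> r_bounds; rewrite -(rmod_uniq r_bounds (congp_refl n r)). Qed.

Lemma rmod0 n : rmod 0 (P ^+ n) = 0.
Proof. by rewrite rmod_id // lexx expP_gt0. Qed.

(** * Canonical representatives *)

Section Representatives.
Variable x : Qp.
Hypothesis xQ : isQp p x.

Lemma isQp_bounds n : 0 <= x n < P ^+ n.
Proof. by case: xQ. Qed.

Lemma isQp_congp n N : (n <= N)%N -> congp n (x N) (x n).
Proof.
elim: N => [|N IHN]; first by rewrite leqn0 => /eqP ->; apply: congp_refl.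
rewrite leq_eqVlt ltnS => /predU1P[-> | n_le_N]; first exact: congp_refl.
case: xQ => _ x_step _; apply: congp_trans (IHN n_le_N).
exact: congpW n_le_N (x_step N : congp N _ _).
Qed.

Lemma isQp_rmod n N : (n <= N)%N -> x n = rmod (x N) (P ^+ n).
Proof. by move=> /isQp_congp /congp_sym; apply/rmod_uniq/isQp_bounds. Qed.

Lemma isQp_eq0W n N : (n <= N)%N -> x N = 0 -> x n = 0.
Proof. by move=> /isQp_rmod -> ->; rewrite rmod0. Qed.

Lemma isQp_pint k n : pint k (x 0%N) -> pint k (x n).
Proof. exact/pint_congp/congp_sym/isQp_congp. Qed.

Lemma isQp_pint0 : pint 0 (x 0%N) <-> x 0%N = 0.
Proof.
split=> [|->]; last exact: pint0.
rewrite /pint expr0 mul1r => /int_norm_lt1; apply.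
by have := isQp_bounds 0; rewrite expr0 => /andP[x0_ge0 x0_lt1]; rewrite ger0_norm.
Qed.

Lemma pden_pint : pint (pden p x) (x 0%N).
Proof.
rewrite /pden; case: pselect => [ex|[]]; first by case: ex_minnP.
by case: xQ.
Qed.

Lemma pint_pden n : pint (pden p x) (x n).
Proof. exact: isQp_pint pden_pint. Qed.

Lemma pden_min k : pint k (x 0%N) -> (pden p x <= k)%N.
Proof. by rewrite /pden; case: pselect => // ex x_k; case: ex_minnP => v _; apply. Qed.

Lemma pden_eq0 : (pden p x == 0%N) = (x 0%N == 0).
Proof.
apply/eqP/eqP => [pden0|/isQp_pint0/pden_min]; last by rewrite leqn0 => /eqP.
by apply/isQp_pint0; have := pden_pint; rewrite pden0.
Qed.

Lemma pnorm_le_expPN m : pnorm p x <= P ^- m <-> x m = 0.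
Proof.
rewrite /pnorm lt0n pden_eq0; have [x0_eq0|x0_neq0] /= := eqVneq (x 0%N) 0.
  case: pselect => [ex|all0]; last first.
    split=> _; last exact/ltW/expPN_gt0.
    by apply/eqP/contraT => xm_neq0; case: all0; exists m.
  case: ex_minnP => v xv_neq0 v_min; rewrite expPN_le.
  have v_gt0 : (0 < v)%N by rewrite lt0n; apply: contraNneq xv_neq0 => ->; rewrite x0_eq0.
  split=> [m_lt_v | xm_eq0].
    by apply/eqP/contraT => /v_min; move: m_lt_v v_gt0; lia.
  have : (m < v)%N.
    by rewrite ltnNge; apply/negP => v_le_m; rewrite (isQp_eq0W v_le_m xm_eq0) eqxx in xv_neq0.
  by move: v_gt0; lia.
split=> [|/(isQp_eq0W (leq0n m))/eqP]; last by rewrite (negbTE x0_neq0).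
rewrite leNgt => /negP[]; apply: (le_lt_trans (y := 1)).
  by rewrite invf_le1 ?expP_gt0 // exprn_ege1 // ltW // P_gt1.
by rewrite exprn_egt1 ?P_gt1 // pden_eq0.
Qed.

Lemma pnorm_le1 : pnorm p x <= 1 <-> x 0%N = 0.
Proof. by rewrite -(pnorm_le_expPN 0) expr0 invr1. Qed.

Lemma pnorm_gt1 : 1 < pnorm p x <-> x 0%N != 0.
Proof.
rewrite ltNge; split=> [/negP nle | x0_neq0]; first by apply/eqP => /pnorm_le1/nle.
by apply/negP => /pnorm_le1/eqP; rewrite (negbTE x0_neq0).
Qed.

End Representatives.

(** * Arithmetic of representatives *)

Lemma isQp_rmod_seq (s : nat -> rat) k :
  (forall n, congp n (s n.+1) (s n)) -> pint k (s 0%N) ->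
  isQp p (fun n => rmod (s n) (P ^+ n)).
Proof.
move=> s_step s0_k; split=> [n | n | ]; first exact: rmod_bounds.
  apply: congp_trans (congpW (leqnSn n) (rmod_congp _ _)) _.
  exact: congp_trans (s_step n) (congp_sym (rmod_congp n _)).
by exists k; apply: pint_congp s0_k; apply/congp_sym/rmod_congp.
Qed.

Lemma pzeroE n : pzero p n = 0.
Proof. exact: rmod0. Qed.

Lemma poneE n : (0 < n)%N -> pone p n = 1.
Proof. by move=> n_gt0; rewrite /pone /fromQ rmod_id // ler01 exprn_egt1 ?P_gt1 -?lt0n. Qed.

Lemma isQp_fromQ k r : pint k r -> isQp p (fromQ p r).
Proof. exact: isQp_rmod_seq (fun n => congp_refl n r). Qed.

Lemma fromQ_eq0 r n : r / P ^+ n \is a Num.int -> fromQ p r n = 0.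
Proof. by move=> r_div; rewrite /fromQ (rmod_congr (s := 0)) ?rmod0 // /congp subr0. Qed.

Lemma pint_fromQ k r : pint k r -> pint k (fromQ p r 0%N).
Proof. exact/pint_congp/congp_sym/rmod_congp. Qed.

Lemma isQp_pzero : isQp p (pzero p).
Proof. exact/(isQp_fromQ (k := 0))/pint0. Qed.

Lemma isQp_pone : isQp p (pone p).
Proof. by apply/(isQp_fromQ (k := 0))/pint_int. Qed.

Lemma isQp_padd x y : isQp p x -> isQp p y -> isQp p (padd p x y).
Proof.
move=> xQ yQ; apply: (isQp_rmod_seq (k := pden p x + pden p y)).
  by move=> n; apply: congpD; apply: isQp_congp.
by apply: pintD; apply: pintW (pden_pint _) => //; rewrite ?leq_addr ?leq_addl.
Qed.

Lemma isQp_popp x : isQp p x -> isQp p (popp p x).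
Proof.
move=> xQ; apply: (isQp_rmod_seq (k := pden p x)); last exact/pintN/pden_pint.
by move=> n; apply/congpN/isQp_congp.
Qed.

Lemma isQp_psub x y : isQp p x -> isQp p y -> isQp p (psub p x y).
Proof. by move=> xQ /isQp_popp; apply: isQp_padd. Qed.

Lemma pnorm_psub_le x y m : isQp p x -> isQp p y ->
  pnorm p (psub p y x) <= P ^- m <-> y m = x m.
Proof.
move=> xQ yQ; rewrite (pnorm_le_expPN (isQp_psub yQ xQ)) /psub /padd /popp.
have x_opp : congp m (y m + rmod (- x m) (P ^+ m)) (y m - x m).
  exact/congpD/rmod_congp/congp_refl.
split=> ym_eq; last by rewrite (rmod_congr x_opp) ym_eq subrr rmod0.
apply: congp_uniq (isQp_bounds yQ _) (isQp_bounds xQ _) _.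
rewrite /congp -[y m - x m]subr0 -ym_eq.
exact/congp_sym/(congp_trans (rmod_congp _ _)).
Qed.

Lemma pmul_congp x y a b n m : isQp p x -> isQp p y ->
  pint a (x 0%N) -> pint b (y 0%N) -> (n + a + b <= m)%N ->
  congp n (pmul p x y n) (x m * y m).
Proof.
move=> xQ yQ x_a y_b le_m; apply: congp_trans (rmod_congp _ _) _.
set L := (n + _)%N; have le_L : (L <= m)%N.
  by apply: leq_trans le_m; rewrite -addnA leq_add2l leq_add ?pden_min.
apply: (congpM (pint_pden xQ _) (pint_pden yQ _)).
  by apply/congp_sym/(congpW _ (isQp_congp xQ le_L)); rewrite /L; lia.
by apply/congp_sym/(congpW _ (isQp_congp yQ le_L)); rewrite /L; lia.
Qed.

Lemma congp_eq0 n z : 0 <= z < P ^+ n -> congp n z 0 -> z = 0.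
Proof. by move=> z_bounds; apply: congp_uniq z_bounds _; rewrite lexx expP_gt0. Qed.

Lemma isQp_pmul x y : isQp p x -> isQp p y -> isQp p (pmul p x y).
Proof.
move=> xQ yQ; set D := (pden p x + pden p y)%N.
apply: (isQp_rmod_seq (k := D)).
  2: exact: pintM (pint_pden xQ _) (pint_pden yQ _).
move=> n; have le_D : (n + D <= n.+1 + D)%N by rewrite leq_add2r.
apply: (congpM (pint_pden xQ _) (pint_pden yQ _)).
  by apply: congpW (isQp_congp xQ le_D); rewrite leq_add2l leq_addl.
by apply: congpW (isQp_congp yQ le_D); rewrite leq_add2l leq_addr.
Qed.

Lemma pint_pmul x y a b : isQp p x -> isQp p y ->
  pint a (x 0%N) -> pint b (y 0%N) -> pint (a + b) (pmul p x y 0%N).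
Proof.
move=> xQ yQ x_a y_b; apply: pint_congp (congp_sym (rmod_congp _ _)) _.
apply: pintW (pintM (pint_pden xQ _) (pint_pden yQ _)).
by rewrite leq_add ?pden_min.
Qed.

Lemma pmul_eq0l x y n e : isQp p x -> isQp p y ->
  x (n + e)%N = 0 -> pint e (y 0%N) -> pmul p x y n = 0.
Proof.
move=> xQ yQ x_eq0 y_e; apply: congp_eq0 (isQp_bounds (isQp_pmul xQ yQ) n) _.
have x0_0 : pint 0 (x 0%N) by apply/(isQp_pint0 xQ)/(isQp_eq0W xQ (leq0n _) x_eq0).
by have := pmul_congp (n := n) xQ yQ x0_0 y_e (leqnn _); rewrite addn0 x_eq0 mul0r.
Qed.

Lemma pmul_eq0r x y n e : isQp p x -> isQp p y ->
  pint e (x 0%N) -> y (n + e)%N = 0 -> pmul p x y n = 0.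
Proof.
move=> xQ yQ x_e y_eq0; apply: congp_eq0 (isQp_bounds (isQp_pmul xQ yQ) n) _.
have y0_0 : pint 0 (y 0%N) by apply/(isQp_pint0 yQ)/(isQp_eq0W yQ (leq0n _) y_eq0).
by have := pmul_congp (n := n) xQ yQ x_e y0_0 (leqnn _); rewrite addn0 y_eq0 mulr0.
Qed.

Lemma pmul_pone x n : isQp p x -> pmul p x (pone p) n = x n.
Proof.
move=> xQ; set m := (n + pden p x + 0).+1.
have := pmul_congp (n := n) (m := m) xQ isQp_pone (pden_pint xQ)
  (pint_fromQ (pint_int 0 (rpred1 _))) (leqnSn _).
rewrite poneE // mulr1 => xm.
apply: congp_uniq (isQp_bounds (isQp_pmul xQ isQp_pone) n) (isQp_bounds xQ n) _.
by apply: congp_trans xm (isQp_congp xQ _); rewrite /m; lia.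
Qed.

Lemma pmul_fromQ r s a b : pint a r -> pint b s ->
  pmul p (fromQ p r) (fromQ p s) = fromQ p (r * s).
Proof.
move=> r_a s_b; apply/funext => n; set m := (n + a + b)%N.
have rQ := isQp_fromQ r_a; have sQ := isQp_fromQ s_b.
apply: rmod_uniq; first exact/isQp_bounds/isQp_pmul.
apply: congp_trans (pmul_congp (n := n) (m := m) rQ sQ (pint_fromQ r_a) (pint_fromQ s_b)
  (leqnn m)) _.
apply: (congpM (k := a) (l := b)) s_b _ _.
- exact: (isQp_pint rQ m (pint_fromQ r_a)).
- by apply: congpW (rmod_congp _ _); rewrite /m; lia.
- by apply: congpW (rmod_congp _ _); rewrite /m; lia.
Qed.

Lemma pint_padd x y : isQp p x -> isQp p y ->
  pint (pden p x + pden p y) (padd p x y 0%N).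
Proof.
move=> xQ yQ; apply: pint_congp (congp_sym (rmod_congp _ _)) _.
by apply: pintD; apply: pintW (pden_pint _) => //; rewrite ?leq_addr ?leq_addl.
Qed.

Lemma pmulDr_congp x y z n : isQp p x -> isQp p y -> isQp p z ->
  congp n (pmul p x (padd p y z) n) (pmul p x y n + pmul p x z n).
Proof.
move=> xQ yQ zQ; set a := pden p x; set b := (pden p y + pden p z)%N.
set m := (n + a + b)%N; have x_a : pint a (x 0%N) := pden_pint xQ.
have y_b : pint b (y 0%N) by apply: pintW (pden_pint yQ); rewrite leq_addr.
have z_b : pint b (z 0%N) by apply: pintW (pden_pint zQ); rewrite leq_addl.
apply: congp_trans (pmul_congp (m := m) xQ (isQp_padd yQ zQ) x_a (pint_padd yQ zQ) _) _.
  exact: leqnn.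
have yz_m : congp (n + a) (padd p y z m) (y m + z m).
  by apply: congpW (rmod_congp _ _); rewrite /m leq_addr.
apply: congp_trans (congpMl (isQp_pint xQ m x_a) yz_m) _.
by rewrite mulrDr; apply: congpD; apply: congp_sym;
  [exact: (pmul_congp xQ yQ x_a y_b (leqnn m)) | exact: (pmul_congp xQ zQ x_a z_b (leqnn m))].
Qed.

Lemma pmulA_congp x a y D E n : isQp p x -> isQp p a -> isQp p y ->
  pint D (x 0%N) -> pint 0 (a 0%N) -> pint E (y 0%N) ->
  congp n (pmul p x (pmul p a y) n) (a (n + D + E)%N * pmul p x y (n + D + E)%N).
Proof.
move=> xQ aQ yQ x_D a_0 y_E; set L := (n + D + E)%N; set L' := (L + D + E)%N.
have le_LL' : (L <= L')%N by rewrite /L' -addnA leq_addr.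
have ay_E : pint E (pmul p a y 0%N) by rewrite -[E]add0n; apply: pint_pmul.
apply: congp_trans (pmul_congp (m := L) xQ (isQp_pmul aQ yQ) x_D ay_E (leqnn L)) _.
have ay_L : congp L (pmul p a y L) (a L' * y L').
  by apply: pmul_congp aQ yQ a_0 y_E _; rewrite /L' /L; lia.
have xy_L : congp L (pmul p x y L) (x L' * y L').
  by apply: pmul_congp xQ yQ x_D y_E _; rewrite /L'.
apply: (congp_trans (s := x L' * (a L' * y L'))).
  apply: (congpM (l := E) (isQp_pint xQ L x_D) _ _ (congpW _ ay_L)).
  - by rewrite -[E]add0n; apply: pintM; apply: isQp_pint.
  - by apply: congpW (congp_sym (isQp_congp xQ le_LL')); rewrite /L; lia.
  - by rewrite /L; lia.
rewrite (mulrCA (x L')); apply/congp_sym/(congpM (k := 0) (l := D + E)).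
- exact: (isQp_pint aQ L a_0).
- by apply: pintM; apply: isQp_pint.
- by apply: congpW (congp_sym (isQp_congp aQ le_LL')); rewrite /L; lia.
- by apply: congpW xy_L; rewrite /L; lia.
Qed.

(** * Vectors and the operator of a matrix *)

Lemma pnorm_gt1_set (T : Type) (f : T -> Qp) : (forall t, isQp p (f t)) ->
  [set t | 1 < pnorm p (f t)] = [set t | f t 0%N != 0].
Proof. by move=> fQ; apply/seteqP; split=> t /=; rewrite pnorm_gt1. Qed.

Lemma finite_pnorm_gtP (T : Type) (f : T -> Qp) : (forall t, isQp p (f t)) ->
  (forall eps : rat, 0 < eps -> finite_set [set t | eps < pnorm p (f t)]) <->
  (forall m, finite_set [set t | f t m != 0]).
Proof.
move=> fQ; split=> [fin_eps m | fin_m eps /expPN_lt [m Pm_lt_eps]].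
  apply: sub_finite_set (fin_eps _ (expPN_gt0 m)) => t /= ftm_neq0; rewrite ltNge.
  by apply: contra ftm_neq0 => /(pnorm_le_expPN (fQ t) m) ->.
apply: sub_finite_set (fin_m m) => t /=; apply: contraTneq => ftm_eq0.
by rewrite -leNgt (le_trans _ (ltW Pm_lt_eps)) //; apply/(pnorm_le_expPN (fQ t) m).
Qed.

Definition den_bound (T : choiceType) (f : T -> Qp) : nat :=
  \max_(t <- fset_set [set t | f t 0%N != 0]) pden p (f t).

Lemma pint_den_bound (T : choiceType) (f : T -> Qp) t :
  (forall t, isQp p (f t)) -> finite_set [set t | f t 0%N != 0] ->
  pint (den_bound f) (f t 0%N).
Proof.
move=> fQ f_fin; have [->|ft_neq0] := eqVneq (f t 0%N) 0; first exact: pint0.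
apply: pintW (pden_pint (fQ t)); apply: (leq_bigmax_seq _ (P := predT)) => //.
by rewrite in_fset_set // mem_set.
Qed.

Section Vectors.
Variable X : countType.
Implicit Types (xi eta : X -> Qp) (F G : set X).

Definition finfrac xi :=
  (forall i, isQp p (xi i)) /\ finite_set [set i | xi i 0%N != 0].

Lemma inQpX_finfrac xi : inQpX p xi <-> finfrac xi.
Proof. by split=> -[xiQ xi_fin]; split; rewrite // ?pnorm_gt1_set // -pnorm_gt1_set. Qed.

Lemma SP_res0 F xi i : SP p F xi -> ~ F i -> xi i 0%N = 0.
Proof. by move=> [xiQ xi_int] /xi_int /(pnorm_le1 (xiQ i)). Qed.

Lemma SP_finfrac F xi : finite_set F -> SP p F xi -> finfrac xi.
Proof.
move=> F_fin xi_SP; split; first by case: xi_SP.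
apply: sub_finite_set F_fin => i /= xi_neq0; apply: contrapT => /(SP_res0 xi_SP).
exact/eqP.
Qed.

Lemma finfrac_SP xi : finfrac xi -> SP p [set i | xi i 0%N != 0] xi.
Proof.
by move=> [xiQ _]; split=> // i /negP; rewrite negbK => /eqP /(pnorm_le1 (xiQ i)).
Qed.

Lemma fsumT_fset (f : X -> rat) S : finite_set S -> (forall j, f j != 0 -> S j) ->
  \sum_(j \in [set: X]) f j = \sum_(j <- fset_set S) f j.
Proof.
move=> S_fin f_supp; rewrite -(fsbig_widen S) ?fsbig_finite // => j [_ /= Sj].
by apply/eqP/contraT => /f_supp.
Qed.

Section MatrixOperator.
Variable M : X -> X -> Qp.
Hypothesis MQ : forall i j, isQp p (M i j).
Hypothesis M_fin : finite_set [set ij : X * X | M ij.1 ij.2 0%N != 0].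
Hypothesis M_row : forall i m, finite_set [set j | M i j m != 0].

Definition mx_apply xi : X -> Qp :=
  fun i n => rmod (\sum_(j \in [set: X]) pmul p (M i j) (xi j) n) (P ^+ n).

Local Notation D := (den_bound (fun ij : X * X => M ij.1 ij.2)).

Lemma pint_mx i j : pint D (M i j 0%N).
Proof. by apply: (pint_den_bound (f := fun ij : X * X => M ij.1 ij.2) (i, j)) => // -[]. Qed.

Lemma mx_term_eq0 xi i j n : isQp p (xi j) -> xi j 0%N = 0 -> M i j n = 0 ->
  pmul p (M i j) (xi j) n = 0.
Proof.
move=> xijQ xij_eq0 Mij_eq0; apply: (pmul_eq0l (e := 0)) => //; first by rewrite addn0.
exact/(isQp_pint0 xijQ).
Qed.

Definition mx_supp xi i n := [set j | xi j 0%N != 0 \/ M i j n != 0].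

Lemma mx_supp_fin xi i n : finfrac xi -> finite_set (mx_supp xi i n).
Proof.
move=> [_ xi_fin].
have -> : mx_supp xi i n = [set j | xi j 0%N != 0] `|` [set j | M i j n != 0] by [].
by rewrite finite_setU; split; last exact: M_row.
Qed.

Lemma mx_suppW xi i m n : (m <= n)%N -> mx_supp xi i m `<=` mx_supp xi i n.
Proof.
move=> le_mn j [|Mijm_neq0]; [by left | right].
by apply: contra Mijm_neq0 => /eqP /(isQp_eq0W (MQ i j) le_mn) ->.
Qed.

Lemma mx_fsumE xi i n S : finfrac xi -> finite_set S -> mx_supp xi i n `<=` S ->
  \sum_(j \in [set: X]) pmul p (M i j) (xi j) n
  = \sum_(j <- fset_set S) pmul p (M i j) (xi j) n.
Proof.
move=> [xiQ _] S_fin S_supp; apply: fsumT_fset S_fin _ => j.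
have [xij_eq0|] := eqVneq (xi j 0%N) 0; last by move=> ? _; apply: S_supp; left.
have [Mij_eq0|] := eqVneq (M i j n) 0; last by move=> ? _; apply: S_supp; right.
by rewrite mx_term_eq0 ?eqxx.
Qed.

Lemma pint_mx_fsum xi i : finfrac xi ->
  pint (D + den_bound xi) (\sum_(j \in [set: X]) pmul p (M i j) (xi j) 0%N).
Proof.
move=> xi_frac; rewrite (mx_fsumE xi_frac (mx_supp_fin i 0 xi_frac)) //.
have [xiQ xi_fin] := xi_frac; apply: pint_sum => j.
exact: pint_pmul (MQ i j) (xiQ j) (pint_mx i j) (pint_den_bound j xiQ xi_fin).
Qed.

Lemma isQp_mx_apply xi i : finfrac xi -> isQp p (mx_apply xi i).
Proof.
move=> xi_frac; apply: isQp_rmod_seq (pint_mx_fsum i xi_frac) => n.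
have S_fin := mx_supp_fin i n.+1 xi_frac.
rewrite !(mx_fsumE xi_frac S_fin) //; last exact: mx_suppW.
apply: congp_sum => j; apply: isQp_congp => //.
by apply: isQp_pmul (MQ i j) _; case: xi_frac.
Qed.

Lemma pint_mx_apply xi i : finfrac xi -> pint (D + den_bound xi) (mx_apply xi i 0%N).
Proof. by move=> /(pint_mx_fsum i); apply/pint_congp/congp_sym/rmod_congp. Qed.

Hypothesis M_col : forall j m, finite_set [set i | M i j m != 0].

Lemma finfrac_mx_apply xi : finfrac xi -> finfrac (mx_apply xi).
Proof.
move=> xi_frac; split=> [i|]; first exact: isQp_mx_apply.
have [xiQ xi_fin] := xi_frac; set E := den_bound xi.
apply: (sub_finite_set (B := \bigcup_(j in [set j | xi j 0%N != 0]) [set i | M i j E != 0]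
  `|` fst @` [set ij : X * X | M ij.1 ij.2 0%N != 0])); last first.
  by rewrite finite_setU; split; [exact: bigcup_finite | exact: finite_image].
move=> i /= Ai_neq0; have [j term_neq0] : exists j, pmul p (M i j) (xi j) 0%N != 0.
  apply: contrapT => none; move: Ai_neq0; rewrite /mx_apply fsbig1 ?rmod0 ?eqxx // => j _.
  by apply/eqP/negPn/negP => term_neq0; apply: none; exists j.
have [xij_eq0 | xij_neq0] := eqVneq (xi j 0%N) 0.
  right; exists (i, j) => //=; apply: contra term_neq0 => /eqP Mij_eq0.
  by rewrite mx_term_eq0.
left; exists j => //=; apply: contra term_neq0 => /eqP Mij_eq0.
by rewrite (pmul_eq0l (e := E)) // (pint_den_bound j xiQ xi_fin).
Qed.

Lemma finfrac_vadd xi eta : finfrac xi -> finfrac eta -> finfrac (vadd p xi eta).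
Proof.
move=> [xiQ xi_fin] [etaQ eta_fin]; split=> [j|]; first exact: isQp_padd.
apply: (sub_finite_set (B := [set j | xi j 0%N != 0] `|` [set j | eta j 0%N != 0])).
  move=> j /=; have [xij_eq0|] := eqVneq (xi j 0%N) 0; last by left.
  have [etaj_eq0|] := eqVneq (eta j 0%N) 0; last by right.
  by rewrite /vadd /padd xij_eq0 etaj_eq0 addr0 rmod0 eqxx.
by rewrite finite_setU.
Qed.

Lemma mx_applyD xi eta : finfrac xi -> finfrac eta ->
  mx_apply (vadd p xi eta) = vadd p (mx_apply xi) (mx_apply eta).
Proof.
move=> xi_frac eta_frac; apply/funext => i; apply/funext => n.
have [[xiQ _] [etaQ _]] := (xi_frac, eta_frac).
set S := mx_supp xi i n `|` mx_supp eta i n.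
have S_fin : finite_set S by rewrite finite_setU; split; exact: mx_supp_fin.
have xi_eta_supp : mx_supp (vadd p xi eta) i n `<=` S.
  move=> j [|]; last by left; right.
  rewrite /vadd /padd; have [xij_eq0|] := eqVneq (xi j 0%N) 0; last by left; left.
  have [etaj_eq0|] := eqVneq (eta j 0%N) 0; last by right; left.
  by rewrite xij_eq0 etaj_eq0 addr0 rmod0 eqxx.
rewrite {1}/mx_apply (mx_fsumE (finfrac_vadd xi_frac eta_frac) S_fin xi_eta_supp).
rewrite /vadd /padd /mx_apply (mx_fsumE xi_frac S_fin) => [|j]; last by left.
rewrite (mx_fsumE eta_frac S_fin) => [|j]; last by right.
apply: rmod_congr.
apply: congp_trans (congp_sum _ (fun j => pmulDr_congp n (MQ i j) (xiQ j) (etaQ j))) _.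
by rewrite big_split; apply: congp_sym; apply: congpD; apply: rmod_congp.
Qed.

Lemma vscale_res0 a xi j : isQp p a -> a 0%N = 0 -> isQp p (xi j) ->
  xi j 0%N = 0 -> vscale p a xi j 0%N = 0.
Proof.
move=> aQ a0_eq0 xijQ xij_eq0; apply: (pmul_eq0r (e := 0)) => //.
exact/(isQp_pint0 aQ).
Qed.

Lemma finfrac_vscale a xi : isQp p a -> a 0%N = 0 -> finfrac xi -> finfrac (vscale p a xi).
Proof.
move=> aQ a0_eq0 [xiQ xi_fin]; split=> [j|]; first exact: isQp_pmul.
apply: sub_finite_set xi_fin => j /=; apply: contra => /eqP.
by move/(vscale_res0 aQ a0_eq0 (xiQ j)) ->.
Qed.

Lemma mx_applyZ a xi : isQp p a -> a 0%N = 0 -> finfrac xi ->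
  mx_apply (vscale p a xi) = vscale p a (mx_apply xi).
Proof.
move=> aQ a0_eq0 xi_frac; have [xiQ xi_fin] := xi_frac.
have a_0 : pint 0 (a 0%N) by apply/(isQp_pint0 aQ).
apply/funext => i; apply/funext => n; set E := den_bound xi; set L := (n + D + E)%N.
have S_fin := mx_supp_fin i L xi_frac.
have axi_supp : mx_supp (vscale p a xi) i n `<=` mx_supp xi i L.
  move=> j [axij_neq0 | Mijn_neq0]; last first.
    by apply: (mx_suppW (m := n) (n := L)); [rewrite /L -addnA leq_addr | right].
  left; apply: contra axij_neq0 => /eqP.
  by move/(vscale_res0 aQ a0_eq0 (xiQ j)) ->.
rewrite {1}/mx_apply (mx_fsumE (finfrac_vscale aQ a0_eq0 xi_frac) S_fin axi_supp).
symmetry; apply: rmod_uniq; first exact/isQp_bounds/isQp_pmul/isQp_mx_apply.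
have Axi_L : congp (n + 0) (mx_apply xi i L)
    (\sum_(j <- fset_set (mx_supp xi i L)) pmul p (M i j) (xi j) L).
  by rewrite /mx_apply (mx_fsumE xi_frac S_fin) //; apply: congpW (rmod_congp _ _); lia.
apply: congp_trans (pmul_congp (m := L) aQ (isQp_mx_apply i xi_frac) a_0
  (pint_mx_apply i xi_frac) _) _; first by rewrite /L; lia.
apply: congp_trans (congpMl (isQp_pint aQ L a_0) Axi_L) _.
rewrite mulr_sumr; apply: congp_sum => j; apply/congp_sym/pmulA_congp => //.
- exact: pint_mx.
- exact: pint_den_bound.
Qed.

Lemma mx_apply_delta j : mx_apply (delta p j) = fun i => M i j.
Proof.
apply/funext => i; apply/funext => n.
have off_j k : k != j -> pmul p (M i k) (delta p j k) n = 0.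
  move=> /negbTE k_neq_j; rewrite /delta k_neq_j.
  exact: pmul_eq0r (MQ i k) isQp_pzero (pden_pint (MQ i k)) (pzeroE _).
rewrite /mx_apply -(fsbig_widen [set j]) // ?fsbig_set1; last first.
  by move=> k [_ /eqP k_neq_j]; apply/off_j.
by rewrite /delta eqxx pmul_pone // rmod_id // isQp_bounds.
Qed.

Lemma mx_apply_local xi eta i n K : finfrac xi -> finfrac eta ->
  (n + D + den_bound xi <= K)%N ->
  (forall j, eta j K = xi j K \/ [/\ M i j n = 0, xi j 0%N = 0 & eta j 0%N = 0]) ->
  mx_apply eta i n = mx_apply xi i n.
Proof.
move=> xi_frac eta_frac le_K agree; have [[xiQ xi_fin] [etaQ _]] := (xi_frac, eta_frac).
set S := mx_supp xi i n `|` mx_supp eta i n.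
have S_fin : finite_set S by rewrite finite_setU; split; exact: mx_supp_fin.
rewrite /mx_apply (mx_fsumE xi_frac S_fin) => [|j]; last by left.
rewrite (mx_fsumE eta_frac S_fin) => [|j]; last by right.
apply: rmod_congr; apply: congp_sum => j.
have [etajK | [Mij_eq0 xij_eq0 etaj_eq0]] := agree j; last first.
  by rewrite (mx_term_eq0 (etaQ j)) ?(mx_term_eq0 (xiQ j)) //; exact: congp_refl.
have xij_E := pint_den_bound j xiQ xi_fin.
have etaj_E : pint (den_bound xi) (eta j 0%N).
  by rewrite (isQp_rmod (etaQ j) (leq0n K)) etajK -(isQp_rmod (xiQ j)).
apply: congp_trans (pmul_congp (MQ i j) (etaQ j) (pint_mx i j) etaj_E le_K) _.
by rewrite etajK; apply/congp_sym/(pmul_congp (MQ i j) (xiQ j) (pint_mx i j) xij_E le_K).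
Qed.

Lemma mx_apply_continuous U : tau_open p U ->
  tau_open p [set xi | inQpX p xi /\ U (mx_apply xi)].
Proof.
move=> [_ U_open]; split=> [xi [] // | F F_fin xi xi_SP [[/inQpX_finfrac xi_frac U_Axi] _]].
have [xiQ _] := xi_frac; have [AxiQ Axi_fin] := finfrac_mx_apply xi_frac.
have Axi_SP := finfrac_SP (finfrac_mx_apply xi_frac).
have [G' [G'_fin [eps [eps_gt0 G'_nbhd]]]] :=
  U_open _ Axi_fin (mx_apply xi) Axi_SP (conj U_Axi Axi_SP).
have [m Pm_lt_eps] := expPN_lt eps_gt0; set K := (m + D + den_bound xi)%N.
(* The residues modulo p^m of (A eta)_i for i in G', and modulo 1 of all the
   (A eta)_i, only depend on the coordinates of eta in G. *)
set G := F `|` \bigcup_(i in G') [set j | M i j m != 0]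
  `|` snd @` [set ij : X * X | M ij.1 ij.2 0%N != 0].
have G_fin : finite_set G.
  by rewrite !finite_setU; split; [split=> //; exact: bigcup_finite | exact: finite_image].
exists G; split=> //; exists (P ^- K); split; first exact: expPN_gt0.
move=> eta eta_SP eta_near; have eta_frac := SP_finfrac F_fin eta_SP.
have [AetaQ _] := finfrac_mx_apply eta_frac.
have Aeta_eq i n : (n <= m)%N -> (forall j, M i j n != 0 -> G j) ->
    mx_apply eta i n = mx_apply xi i n.
  move=> le_nm G_supp; apply: (mx_apply_local (K := K)) => //; first by rewrite /K; lia.
  move=> j; have [Gj | nGj] := pselect (G j).
    by left; apply/(pnorm_psub_le K (xiQ j) (eta_frac.1 j))/ltW/eta_near.
  have nFj : ~ F j by move=> Fj; apply: nGj; left; left.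
  right; split; [|exact: SP_res0 xi_SP nFj | exact: SP_res0 eta_SP nFj].
  by apply/eqP/contraT => /G_supp.
have Aeta_SP : SP p [set i | mx_apply xi i 0%N != 0] (mx_apply eta).
  split=> // i /negP; rewrite negbK => /eqP Axi_eq0; apply/(pnorm_le1 (AetaQ i)).
  by rewrite Aeta_eq // => j Mij_neq0; right; exists (i, j).
have Aeta_near i : G' i -> pnorm p (psub p (mx_apply eta i) (mx_apply xi i)) < eps.
  move=> G'i; apply: le_lt_trans Pm_lt_eps; apply/(pnorm_psub_le m (AxiQ i) (AetaQ i)).
  by apply: Aeta_eq => // j Mij_neq0; left; right; exists i.
have [U_Aeta _] := G'_nbhd (mx_apply eta) Aeta_SP Aeta_near.
by split=> //; split=> //; apply/inQpX_finfrac.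
Qed.

Lemma in_B_mx_apply : in_B p mx_apply.
Proof.
split.
- by move=> xi /inQpX_finfrac/finfrac_mx_apply/inQpX_finfrac.
- by move=> xi eta /inQpX_finfrac xi_frac /inQpX_finfrac; apply: mx_applyD.
- by move=> a xi aQ /(pnorm_le1 aQ) a0_eq0 /inQpX_finfrac; apply: mx_applyZ.
- exact: mx_apply_continuous.
Qed.

End MatrixOperator.

(** * The matrix of a bounded operator *)

Definition vzero : X -> Qp := fun _ => pzero p.

Lemma finfrac_vzero : finfrac vzero.
Proof.
split=> [j|]; first exact: isQp_pzero.
by apply: (sub_finite_set (B := set0)) => // j /=; rewrite pzeroE eqxx.
Qed.

Lemma SP0_vzero : SP p set0 vzero.
Proof. by split=> [i|i _]; [exact: isQp_pzero | apply/(pnorm_le1 isQp_pzero)/pzeroE]. Qed.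

Lemma SP0_delta j : SP p set0 (delta p j : X -> Qp).
Proof.
split=> [i|i _]; rewrite /delta; case: eqP => _; do ?[exact: isQp_pone | exact: isQp_pzero].
  by apply/(pnorm_le1 isQp_pone)/fromQ_eq0; rewrite expr0 divr1 rpred1.
by apply/(pnorm_le1 isQp_pzero); rewrite pzeroE.
Qed.

Lemma vscale0 xi : (forall i, isQp p (xi i)) -> vscale p (pzero p) xi = vzero.
Proof.
move=> xiQ; apply/funext => i; apply/funext => n; rewrite /vzero pzeroE.
by apply: (pmul_eq0l (e := pden p (xi i))) isQp_pzero (xiQ i) (pzeroE _) (pden_pint _).
Qed.

Lemma tau_open_res0 S m : finite_set S \/ m = 0%N ->
  tau_open p [set eta : X -> Qp | inQpX p eta /\ forall i, S i -> eta i m = 0].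
Proof.
move=> S_cond; split=> [xi [] // | F F_fin xi xi_SP [[_ xi_S] _]].
(* Outside F the residues modulo 1 already vanish on SP F. *)
exists (F `|` [set i | S i /\ (0 < m)%N]); split.
  rewrite finite_setU; split=> //; case: S_cond => [S_fin | ->].
    by apply: sub_finite_set S_fin => i [].
  by apply: (sub_finite_set (B := set0)) => // i [].
exists (P ^- m); split=> [|eta eta_SP eta_near]; first exact: expPN_gt0.
split=> //; split=> [|i Si]; first exact/inQpX_finfrac/(SP_finfrac F_fin eta_SP).
have [Gi | nGi] := pselect ((F `|` [set i | S i /\ (0 < m)%N]) i).
  have [xiQ _] := xi_SP; have [etaQ _] := eta_SP.
  by rewrite ((pnorm_psub_le m (xiQ i) (etaQ i)).1 (ltW (eta_near i Gi))) xi_S.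
have m_eq0 : m = 0%N.
  by apply/eqP; rewrite -leqn0 leqNgt; apply/negP => m_gt0; apply: nGi; right.
by rewrite m_eq0; apply: SP_res0 eta_SP _ => Fi; apply: nGi; left.
Qed.

Section BoundedOperator.
Variable A : (X -> Qp) -> (X -> Qp).
Hypothesis A_B : in_B p A.

Lemma finfrac_in_B xi : finfrac xi -> finfrac (A xi).
Proof. by case: A_B => A_QpX _ _ _ /inQpX_finfrac/A_QpX/inQpX_finfrac. Qed.

Lemma in_B_scale a xi : isQp p a -> a 0%N = 0 -> finfrac xi ->
  A (vscale p a xi) = vscale p a (A xi).
Proof.
case: A_B => _ _ A_scale _ aQ a0_eq0 /inQpX_finfrac xi_QpX.
exact: A_scale aQ (proj2 (pnorm_le1 aQ) a0_eq0) xi_QpX.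
Qed.

Lemma in_B_vzero : A vzero = vzero.
Proof.
have [AvQ _] := finfrac_in_B finfrac_vzero.
rewrite -{1}(vscale0 (fun=> isQp_pzero)) in_B_scale ?vscale0 //.
- exact: isQp_pzero.
- exact: finfrac_vzero.
Qed.

Lemma in_B_col_fin k m : finite_set [set i | A (delta p k) i m != 0].
Proof.
pose zeta : X -> Qp := fun i => if i == k then fromQ p (P ^- m) else pzero p.
have Pm_m : pint 0 (P ^+ m) by apply: pint_int; apply: expP_int.
have PNm_m : pint m (P ^- m) by rewrite /pint mulfV ?expP_neq0.
have zeta_frac : finfrac zeta.
  split=> [i|]; rewrite /zeta.
    by case: eqP => _; [exact: isQp_fromQ PNm_m | exact: isQp_pzero].
  apply: (sub_finite_set (B := [set k])); last exact: finite_set1.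
  by move=> i /=; have [-> //|_] := eqVneq i k; rewrite pzeroE eqxx.
have delta_k : delta p k = vscale p (fromQ p (P ^+ m)) zeta.
  apply/funext => i; rewrite /vscale /zeta /delta; case: eqP => _.
    by rewrite (pmul_fromQ Pm_m PNm_m) mulfV ?expP_neq0.
  by rewrite (pmul_fromQ Pm_m (pint0 0)) mulr0.
have [AzetaQ Azeta_fin] := finfrac_in_B zeta_frac.
have PmQ := isQp_fromQ Pm_m.
have Pm_0 : fromQ p (P ^+ m) 0%N = 0 by apply: fromQ_eq0; rewrite expr0 divr1 expP_int.
have Pm_m0 : fromQ p (P ^+ m) (m + 0)%N = 0 by rewrite addn0 fromQ_eq0 // mulfV ?expP_neq0.
apply: sub_finite_set Azeta_fin => i /=; apply: contra => /eqP Azeta_eq0.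
rewrite delta_k in_B_scale // /vscale (pmul_eq0l (e := 0)) //.
exact/(isQp_pint0 (AzetaQ i)).
Qed.

Lemma in_B_delta_near U : tau_open p U -> U vzero ->
  exists2 G, finite_set G & forall j, ~ G j -> U (A (delta p j)).
Proof.
move=> U_open U_0; case: A_B => _ _ _ /(_ U U_open) [_].
move=> /(_ set0 (finite_set0 X) vzero SP0_vzero) A_open.
have [|G [G_fin [eps [eps_gt0 G_nbhd]]]] := A_open.
  by split; [split; [exact/inQpX_finfrac/finfrac_vzero | rewrite in_B_vzero] | exact: SP0_vzero].
exists G => // j nGj; have [m Pm_lt_eps] := expPN_lt eps_gt0.
have near_0 i : G i -> pnorm p (psub p (delta p j i) (vzero i)) < eps.
  move=> Gi; have i_neq_j : (i == j) = false.
    by apply/eqP => i_eq_j; apply: nGj; rewrite -i_eq_j.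
  apply: le_lt_trans Pm_lt_eps; rewrite /delta i_neq_j.
  exact/(pnorm_psub_le m isQp_pzero isQp_pzero).
by have [[_ ?] _] := G_nbhd (delta p j) (SP0_delta j) near_0.
Qed.

Lemma in_B_row_fin k m : finite_set [set j | A (delta p j) k m != 0].
Proof.
have k_open := tau_open_res0 (S := [set k]) (m := m) (or_introl (finite_set1 k)).
have [|G G_fin G_near] := in_B_delta_near k_open.
  by split; [exact/inQpX_finfrac/finfrac_vzero | move=> i _; exact: pzeroE].
apply: sub_finite_set G_fin => j /= Ajk_neq0; apply: contrapT => /G_near [_ /(_ k erefl)].
by apply/eqP.
Qed.

Lemma in_B_res0_fin : finite_set [set ij : X * X | A (delta p ij.2) ij.1 0%N != 0].
Proof.
have Zp_open := tau_open_res0 (S := setT) (m := 0) (or_intror erefl).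
have [|G G_fin G_near] := in_B_delta_near Zp_open.
  by split; [exact/inQpX_finfrac/finfrac_vzero | move=> i _; exact: pzeroE].
apply: (sub_finite_set (B := (\bigcup_(j in G) [set i | A (delta p j) i 0%N != 0]) `*` G)).
  move=> [i j] /= Aij_neq0; have [Gj | nGj] := pselect (G j); first by split=> //; exists j.
  by have [_ /(_ i I) /eqP] := G_near j nGj; rewrite (negbTE Aij_neq0).
by apply: finite_setX => //; apply: bigcup_finite => // j _; apply: in_B_col_fin.
Qed.

End BoundedOperator.

End Vectors.

End Padic.

Theorem theorem2p26 (p : nat) (X : countType) (hp : prime p)
  (M : X -> X -> Qp) (hM : forall i j, isQp p (M i j)) :
  (exists A : (X -> Qp) -> (X -> Qp),
      in_B p A /\ forall i j, M i j = A (delta p j) i)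
  <->
  (finite_set [set ij : X * X | 1 < pnorm p (M ij.1 ij.2)] /\
   forall k : X,
     (forall eps : rat, 0 < eps -> finite_set [set i | eps < pnorm p (M i k)]) /\
     (forall eps : rat, 0 < eps -> finite_set [set j | eps < pnorm p (M k j)])).
Proof.
have p_gt1 := prime_gt1 hp.
rewrite (pnorm_gt1_set p_gt1 (f := fun ij : X * X => M ij.1 ij.2)); last by case.
split=> [[A [A_B M_A]] | [M_fin M_lines]].
  have M_eq : M = fun i j => A (delta p j) i by apply/funext => i; apply/funext => j.
  subst M; split=> [|k]; first exact: in_B_res0_fin.
  by split; apply/finite_pnorm_gtP => // m; [exact: in_B_col_fin | exact: in_B_row_fin].
have M_col k := (finite_pnorm_gtP p_gt1 (hM^~ k)).1 (M_lines k).1.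
have M_row k := (finite_pnorm_gtP p_gt1 (hM k)).1 (M_lines k).2.
exists (mx_apply p M); split; first exact: in_B_mx_apply.
by move=> i j; rewrite mx_apply_delta.
Qed.
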